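(* Let $Q$ be a finite connected quandle, $S$ a set, $\theta:Q\times Q\to\mathrm{Sym}_S$ a quandle cocycle and $E=Q\times_\theta S$. The following are equivalent: (i) $\theta$ is cohomologous to the trivial cocycle $\mathbf{1}$; (ii) $|u^{\mathrm{LMlt}(E)}|=|Q|$ for every $u\in E$; (iii) $Q\times_\theta S\cong Q\times_{\mathbf{1}}S$ as quandles.
   Context: A quandle is a set $Q$ with a binary operation $*$ such that every left translation $L_x:y\mapsto x*y$ is bijective, $x*(y*z)=(x*y)*(x*z)$ and $x*x=x$. $\mathrm{LMlt}(Q)=\langle L_x:x\in Q\rangle$; $Q$ is connected if $\mathrm{LMlt}(Q)$ is transitive; $u^{\mathrm{LMlt}(E)}$ denotes the orbit of $u$. A quandle cocycle with values in $\mathrm{Sym}_S$ is $\theta:Q\times Q\to\mathrm{Sym}_S$ with $\theta_{x*y,x*z}\theta_{x,z}=\theta_{x,y*z}\theta_{y,z}$ and $\theta_{x,x}=1$; $\theta$ is cohomologous to the trivial cocycle $\mathbf{1}$ (constantly the identity) if there is $\gamma:Q\to\mathrm{Sym}_S$ with $\theta_{x,y}=\gamma_{x*y}\gamma_y^{-1}$ for all $x,y$. $Q\times_\theta S$ is the quandle on $Q\times S$ with $(x,a)*(y,b)=(x*y,\theta_{x,y}(b))$; in particular $Q\times_{\mathbf{1}}S$ is $(x,a)*(y,b)=(x*y,b)$. *)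

From mathcomp Require Import all_boot.
Set Implicit Arguments. Unset Strict Implicit. Unset Printing Implicit Defensive.

Definition is_quandle (T : Type) (op : T -> T -> T) : Prop :=
  [/\ forall x, bijective (op x),
      forall x y z, op x (op y z) = op (op x y) (op x z)
    & forall x, op x x = x].

(* Orbit of u under LMlt = < L_x : x in T >: the points reachable from u by
   applying left translations L_x and their inverses L_x^{-1}
   (v is reached via L_x^{-1} from op x v). *)
Inductive lmlt_orbit (T : Type) (op : T -> T -> T) (u : T) : T -> Prop :=
  | lo_refl : lmlt_orbit op u u
  | lo_L : forall x v, lmlt_orbit op u v -> lmlt_orbit op u (op x v)
  | lo_Linv : forall x v, lmlt_orbit op u (op x v) -> lmlt_orbit op u v.

Definition connected (T : Type) (op : T -> T -> T) : Prop :=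
  forall x y, lmlt_orbit op x y.

Definition quandle_cocycle (Q S : Type) (op : Q -> Q -> Q)
  (theta : Q -> Q -> S -> S) : Prop :=
  [/\ forall x y, bijective (theta x y),
      forall x y z s, theta (op x y) (op x z) (theta x z s)
                      = theta x (op y z) (theta y z s)
    & forall x s, theta x x s = s].

Definition cohomologous_to_trivial (Q S : Type) (op : Q -> Q -> Q)
  (theta : Q -> Q -> S -> S) : Prop :=
  exists (gamma gammainv : Q -> S -> S),
    [/\ forall y, cancel (gamma y) (gammainv y),
        forall y, cancel (gammainv y) (gamma y)
      & forall x y s, theta x y s = gamma (op x y) (gammainv y s)].

Definition ext_op (Q S : Type) (op : Q -> Q -> Q) (theta : Q -> Q -> S -> S)
  (a b : Q * S) : Q * S :=
  (op a.1 b.1, theta a.1 b.1 b.2).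

Definition triv_cocycle (Q S : Type) : Q -> Q -> S -> S := fun _ _ s => s.

Definition quandle_iso (T U : Type) (opT : T -> T -> T) (opU : U -> U -> U) : Prop :=
  exists f : T -> U, bijective f /\ forall a b, f (opT a b) = opU (f a) (f b).

From mathcomp Require Import all_boot.
From Stdlib Require Import ClassicalEpsilon.

(* Since theta takes values in bijections and Q is connected, every
   LMlt-orbit of E = Q x_theta S meets every fibre {y} x S; as Q is finite,
   |u^LMlt(E)| = |Q| thus says that every orbit meets every fibre exactly
   once, i.e. is the graph of a map Q -> S.  Fixing q0, the orbit of (q0, s)
   over y defines gamma_y(s); since (y, s) and (x * y, theta_{x,y}(s)) lie in
   one orbit, theta_{x,y} = gamma_{x*y} gamma_y^{-1}.  Conversely a coboundary
   gamma makes (x, s) |-> (x, gamma_x^{-1}(s)) an isomorphism onto Q x_1 S,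
   whose orbits are the sets O x {s} for the orbits O of Q. *)

Definition orbits_in_bijection (Q : Type) {T : Type} (opT : T -> T -> T) : Prop :=
  forall u : T, exists f : Q -> T,
    injective f /\ (forall v, lmlt_orbit opT u v <-> exists x, f x = v).

Lemma lmlt_orbit_trans {T : Type} {op : T -> T -> T} u v w :
  lmlt_orbit op u v -> lmlt_orbit op v w -> lmlt_orbit op u w.
Proof.
move=> Huv; elim=> [|x w' _ IH|x w' _ IH] //.
- exact: lo_L.
- exact: lo_Linv IH.
Qed.

Lemma lmlt_orbit_morph {T U : Type} {opT : T -> T -> T} {opU : U -> U -> U}
    {f : T -> U} :
  {morph f : a b / opT a b >-> opU a b} ->
  forall u v, lmlt_orbit opT u v -> lmlt_orbit opU (f u) (f v).
Proof.
move=> fM u v; elim=> [|x w _ IH|x w _ IH]; first exact: lo_refl.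
- rewrite fM; exact: lo_L.
- rewrite fM in IH; exact: lo_Linv IH.
Qed.

Lemma onto_injF (T : finType) (g : T -> T) :
  (forall y, exists x, g x = y) -> injective g.
Proof.
move=> g_onto; apply/injectiveP/dinjectiveP/image_injP/eqP.
by apply: eq_card => y; have [x <-] := g_onto y; rewrite !inE image_f.
Qed.

Section TrivialExtension.

Variables (Q S : Type) (op : Q -> Q -> Q).
Local Notation E1 := (ext_op op (@triv_cocycle Q S)).

Lemma triv_ext_orbit_snd u v : lmlt_orbit E1 u v -> v.2 = u.2.
Proof. by elim. Qed.

Lemma triv_ext_orbit_lift x y b : lmlt_orbit op x y -> lmlt_orbit E1 (x, b) (y, b).
Proof.
elim=> [|z w _ IH|z w _ IH]; first exact: lo_refl.
- exact: (lo_L (z, b) IH).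
- exact: (@lo_Linv _ _ _ (z, b) (w, b) IH).
Qed.

End TrivialExtension.

Section Extension.

Variables (Q S : Type) (op : Q -> Q -> Q) (theta : Q -> Q -> S -> S).
Local Notation E := (ext_op op theta).
Local Notation E1 := (ext_op op (@triv_cocycle Q S)).

Lemma ext_orbit_meets_fibre :
  connected op -> (forall x y, bijective (theta x y)) ->
  forall u y, exists t, lmlt_orbit E u (y, t).
Proof.
move=> Qconn theta_bij [x0 a] y.
elim: (Qconn x0 y) => [|x v _ [t IH]|x v _ [t IH]].
- by exists a; apply: lo_refl.
- by exists (theta x v t); apply: (lo_L (x, a) IH).
- have [tinv _ thetaK] := theta_bij x v; exists (tinv t).
  by apply: (lo_Linv (x := (x, a))); rewrite /ext_op /= thetaK.
Qed.

Lemma ext_iso_triv_of_cohomologous :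
  cohomologous_to_trivial op theta -> quandle_iso E E1.
Proof.
case=> g [gi [gK giK theta_cob]]; exists (fun p => (p.1, gi p.1 p.2)); split.
- by exists (fun p => (p.1, g p.1 p.2)) => [[x s]|[x s]] /=; rewrite ?gK ?giK.
- by move=> [x a] [y b]; rewrite /ext_op /triv_cocycle /= theta_cob gK.
Qed.

Lemma orbits_in_bijection_of_ext_iso_triv :
  connected op -> quandle_iso E E1 -> orbits_in_bijection Q E.
Proof.
move=> Qconn [f [[g fK gK] fM]] u.
have gM : {morph g : a b / E1 a b >-> E a b}.
  by move=> a b; rewrite -{1}(gK a) -{1}(gK b) -fM fK.
exists (fun x => g (x, (f u).2)); split=> [x y /(can_inj gK) [] //|v].
split=> [/(lmlt_orbit_morph fM)/triv_ext_orbit_snd fv2|[x <-]].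
  by exists (f v).1; rewrite -fv2 -surjective_pairing fK.
rewrite -{1}[u]fK; apply: lmlt_orbit_morph gM _ _ _.
by rewrite {1}[f u]surjective_pairing; apply: triv_ext_orbit_lift; apply: Qconn.
Qed.

Section OrbitGraph.

Hypothesis orbit_graph : forall u y, exists! t, lmlt_orbit E u (y, t).

Definition orbit_coord u y : S :=
  proj1_sig (constructive_indefinite_description _ (orbit_graph u y)).

Lemma orbit_coordP u y : lmlt_orbit E u (y, orbit_coord u y).
Proof. by rewrite /orbit_coord; case: constructive_indefinite_description => ? []. Qed.

Lemma orbit_coord_uniq u y t : lmlt_orbit E u (y, t) -> orbit_coord u y = t.
Proof.
move=> Eut; rewrite /orbit_coord.
by case: constructive_indefinite_description => /= t' [_ t'_uniq]; apply: t'_uniq.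
Qed.

Lemma orbit_coord_fibre y t : orbit_coord (y, t) y = t.
Proof. exact/orbit_coord_uniq/lo_refl. Qed.

Lemma orbit_coord_orbit {u v} :
  lmlt_orbit E u v -> orbit_coord v =1 orbit_coord u.
Proof.
move=> Euv y; symmetry; apply: orbit_coord_uniq.
exact: lmlt_orbit_trans Euv (orbit_coordP v y).
Qed.

Lemma cohomologous_of_orbit_graph (q0 : Q) : cohomologous_to_trivial op theta.
Proof.
exists (fun y s => orbit_coord (q0, s) y), (fun y s => orbit_coord (y, s) q0).
split=> [y s|y s|x y s].
- by rewrite (orbit_coord_orbit (orbit_coordP _ _)) orbit_coord_fibre.
- by rewrite (orbit_coord_orbit (orbit_coordP _ _)) orbit_coord_fibre.
- rewrite (orbit_coord_orbit (orbit_coordP _ _)) -[LHS](orbit_coord_fibre (op x y)).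
  by apply: orbit_coord_orbit; apply: (@lo_L _ _ _ (x, s) (y, s)); apply: lo_refl.
Qed.

End OrbitGraph.

End Extension.

Section FiniteBase.

Variables (Q : finType) (S : Type) (op : Q -> Q -> Q) (theta : Q -> Q -> S -> S).
Hypotheses (Qconn : connected op) (theta_bij : forall x y, bijective (theta x y)).
Local Notation E := (ext_op op theta).

Let meets_fibre := @ext_orbit_meets_fibre Q S op theta Qconn theta_bij.

Lemma orbit_graph_of_orbits_in_bijection :
  orbits_in_bijection Q E -> forall u y, exists! t, lmlt_orbit E u (y, t).
Proof.
move=> Ebij u y; have [t Eut] := meets_fibre u y.
exists t; split=> // t' Eut'.
have [f [_ Ef]] := Ebij u.
have fst_f_inj : injective (fun x => (f x).1).
  apply: onto_injF => z.
  have [s /Ef [x fx]] := meets_fibre u z.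
  by exists x; rewrite fx.
have [x fx] := (Ef _).1 Eut; have [x' fx'] := (Ef _).1 Eut'.
have xx' : x = x' by apply: fst_f_inj; rewrite /= fx fx'.
by move: fx; rewrite xx' fx' => -[].
Qed.

Lemma cohomologous_of_orbits_in_bijection :
  orbits_in_bijection Q E -> cohomologous_to_trivial op theta.
Proof.
move=> /orbit_graph_of_orbits_in_bijection orbit_graph.
have [q0 _|Q0] := pickP (@predT Q); first exact: cohomologous_of_orbit_graph q0.
by exists (fun _ => id), (fun _ => id); split=> // x; have := Q0 x.
Qed.

End FiniteBase.

Theorem corollary2p4 (Q : finType) (S : Type) (op : Q -> Q -> Q)
  (theta : Q -> Q -> S -> S) :
  is_quandle op -> connected op -> quandle_cocycle op theta ->
  [<-> cohomologous_to_trivial op theta;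
       (* |u^LMlt(E)| = |Q| for all u in E: the orbit is in bijection with Q *)
       forall u : Q * S, exists f : Q -> Q * S,
         injective f /\
         (forall v, lmlt_orbit (ext_op op theta) u v <-> exists x, f x = v);
       quandle_iso (ext_op op theta) (ext_op op (@triv_cocycle Q S))].
Proof.
move=> _ Qconn [theta_bij _ _]; tfae.
- move=> coh; apply: orbits_in_bijection_of_ext_iso_triv => //.
  exact: ext_iso_triv_of_cohomologous.
- move=> Ebij; apply: ext_iso_triv_of_cohomologous.
  exact: cohomologous_of_orbits_in_bijection.
- move=> iso; apply: cohomologous_of_orbits_in_bijection => //.
  exact: orbits_in_bijection_of_ext_iso_triv.
Qed.
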